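(* Let $\mathcal{M}=(l;\mathcal{V})$ and $\mathcal{M}'=(l';\mathcal{V}')$ be semi-parametric models over $\Omega\subseteq\mathbb{R}^d$. The following are equivalent: (a) $\mathcal{M}\sim\mathcal{M}'$; (b) for every finite $\mathcal{X}\subset\Omega$ unisolvent for both $\mathcal{V}$ and $\mathcal{V}'$ and every $\sigma^2>0$, the smoother matrices of $\mathcal{M}$ and $\mathcal{M}'$ at $\mathcal{X}$ are equal.
   Context: A semi-parametric model (SPM) over $\Omega$ is a pair $(l;\mathcal{V})$ with $\mathcal{V}=\{v_1,\ldots,v_m\}$ a finite (possibly empty) set of linearly independent functions on $\Omega$ and $l$ a symmetric function on $\Omega\times\Omega$ that is conditionally positive semi-definite w.r.t. $\mathcal{V}$. A finite $\mathcal{X}=\{x_1,\ldots,x_n\}\subset\Omega$ is unisolvent for $\mathcal{V}$ if the basis matrix $\mathbf{V}=[v_j(x_i)]_{i,j}$ has rank $m$; then $\mathbf{Q}$ denotes an orthonormal basis of its column span, $\mathbf{L}=[l(x_i,x_j)]$, $\widetilde{\mathbf{L}}=(\mathbf{I}-\mathbf{Q}\mathbf{Q}^\top)\mathbf{L}(\mathbf{I}-\mathbf{Q}\mathbf{Q}^\top)$, and conditional positive semi-definiteness means $\widetilde{\mathbf{L}}\succeq0$ for all such $\mathcal{X}$. The smoother matrix of the SPM at $\mathcal{X}$ with noise variance $\sigma^2$ is $\mathbf{M}=\mathbf{Q}\mathbf{Q}^\top+\widetilde{\mathbf{L}}(\widetilde{\mathbf{L}}+\sigma^2\mathbf{I})^{-1}$.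 Predictive mean and variance at $x$ given $\mathbf{y}\in\mathbb{R}^n$: $\mathbb{E}(f(x)\mid\mathbf{y})=(\mathbf{l}_{x,\mathcal{X}}\ \mathbf{v}_x)\mathbf{S}^{-1}\binom{\mathbf{y}}{\mathbf{0}}$, $\mathrm{Var}(f(x)\mid\mathbf{y})=l(x,x)-(\mathbf{l}_{x,\mathcal{X}}\ \mathbf{v}_x)\mathbf{S}^{-1}\binom{\mathbf{l}_{x,\mathcal{X}}^\top}{\mathbf{v}_x^\top}$, with $\mathbf{S}=\begin{pmatrix}\mathbf{L}+\sigma^2\mathbf{I}&\mathbf{V}\\ \mathbf{V}^\top&\mathbf{0}\end{pmatrix}$, $\mathbf{l}_{x,\mathcal{X}}=[l(x,x_i)]_i$, $\mathbf{v}_x=[v_j(x)]_j$. $\mathcal{M}\sim\mathcal{M}'$ (prediction-equivalent) means $|\mathcal{V}|=|\mathcal{V}'|$ and for every finite $\mathcal{X}\subset\Omega$ unisolvent for both, all $x\in\Omega$, $\mathbf{y}\in\mathbb{R}^{|\mathcal{X}|}$, $\sigma^2>0$, the predictive means are equal and the predictive variances are equal. *)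

From HB Require Import structures.
From mathcomp Require Import all_boot all_order all_algebra.
From mathcomp Require Import reals.
Set Implicit Arguments. Unset Strict Implicit. Unset Printing Implicit Defensive.
Import Order.TTheory GRing.Theory Num.Theory.
Local Open Scope ring_scope.

Section SPM.
Variables (R : realType) (d : nat).
Notation pt := 'rV[R]_d.

Definition lin_indep_on (Omega : pt -> Prop) (m : nat) (v : 'I_m -> pt -> R) :=
  forall c : 'I_m -> R,
    (forall w, Omega w -> \sum_(j < m) c j * v j w = 0) -> forall j, c j = 0.

Definition basis_mx n m (v : 'I_m -> pt -> R) (x : 'I_n -> pt) : 'M[R]_(n, m) :=
  \matrix_(i < n, j < m) v j (x i).

Definition kernel_mx n (l : pt -> pt -> R) (x : 'I_n -> pt) : 'M[R]_n :=
  \matrix_(i < n, j < n) l (x i) (x j).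

Definition finite_subset (Omega : pt -> Prop) n (x : 'I_n -> pt) :=
  injective x /\ forall i, Omega (x i).

Definition unisolvent n m (v : 'I_m -> pt -> R) (x : 'I_n -> pt) :=
  \rank (basis_mx v x) = m.

Definition orth_basis_of n m (Q V : 'M[R]_(n, m)) :=
  Q^T *m Q = 1%:M /\ (Q^T == V^T)%MS.

Definition Ltilde n m (Q : 'M[R]_(n, m)) (L : 'M[R]_n) : 'M[R]_n :=
  (1%:M - Q *m Q^T) *m L *m (1%:M - Q *m Q^T).

Definition psd n (A : 'M[R]_n) := forall z : 'cV[R]_n, 0 <= (z^T *m A *m z) 0 0.

Definition is_SPM (Omega : pt -> Prop) m (l : pt -> pt -> R) (v : 'I_m -> pt -> R) :=
  lin_indep_on Omega v /\
  (forall a b, Omega a -> Omega b -> l a b = l b a) /\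
  (forall n (x : 'I_n -> pt) (Q : 'M[R]_(n, m)),
     finite_subset Omega x -> unisolvent v x -> orth_basis_of Q (basis_mx v x) ->
     psd (Ltilde Q (kernel_mx l x))).

Definition smoother n m (Q : 'M[R]_(n, m)) (L : 'M[R]_n) (s2 : R) : 'M[R]_n :=
  Q *m Q^T + Ltilde Q L *m invmx (Ltilde Q L + s2%:M).

Definition S_mx n m (l : pt -> pt -> R) (v : 'I_m -> pt -> R) (x : 'I_n -> pt) (s2 : R)
  : 'M[R]_(n + m) :=
  block_mx (kernel_mx l x + s2%:M) (basis_mx v x) (basis_mx v x)^T 0.

Definition lv_row n m (l : pt -> pt -> R) (v : 'I_m -> pt -> R) (x : 'I_n -> pt) (w : pt)
  : 'rV[R]_(n + m) :=
  row_mx (\row_(i < n) l w (x i)) (\row_(j < m) v j w).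

Definition pred_mean n m l (v : 'I_m -> pt -> R) (x : 'I_n -> pt) (s2 : R) (y : 'cV[R]_n)
  (w : pt) : R :=
  (lv_row l v x w *m invmx (S_mx l v x s2) *m col_mx y (0 : 'cV[R]_m)) 0 0.

Definition pred_var n m l (v : 'I_m -> pt -> R) (x : 'I_n -> pt) (s2 : R) (w : pt) : R :=
  l w w - (lv_row l v x w *m invmx (S_mx l v x s2) *m (lv_row l v x w)^T) 0 0.

Definition pred_equiv (Omega : pt -> Prop) m (l : pt -> pt -> R) (v : 'I_m -> pt -> R)
  m' (l' : pt -> pt -> R) (v' : 'I_m' -> pt -> R) :=
  m = m' /\
  forall n (x : 'I_n -> pt), finite_subset Omega x -> unisolvent v x -> unisolvent v' x ->
  forall (w : pt), Omega w -> forall (y : 'cV[R]_n) (s2 : R), 0 < s2 ->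
    pred_mean l v x s2 y w = pred_mean l' v' x s2 y w /\
    pred_var l v x s2 w = pred_var l' v' x s2 w.

End SPM.

From HB Require Import structures.
From mathcomp Require Import all_boot all_order all_algebra.
From mathcomp Require Import reals ring.
From Stdlib Require Import Classical.
Import Order.TTheory GRing.Theory Num.Theory.
Local Open Scope ring_scope.
Set Implicit Arguments. Unset Strict Implicit. Unset Printing Implicit Defensive.

(* Everything is governed by the upper-left n x n block [A] of the inverse of
   the saddle-point matrix [S = (L + s2 I, V; V^T, 0)], which is invertible
   because the projected kernel matrix is psd.  The smoother is [I - s2 A].
   Conversely [A] determines the predictions: at a data point x_k the mean is
   row k of [(I - s2 A) y] and the variance is [s2 (I - s2 A)_kk]; at a new
   point w, a Schur complement expresses mean and variance through the last
   column of [A] for the data extended by w.  Finally [A V = 0], while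
   [A W = 0] forces W into the column span of V, so equal [A] on a set
   unisolvent for both models forces equal spans, hence m = m'. *)

Lemma rV_norm2_gt0 (R : realDomainType) n (u : 'rV[R]_n) : u != 0 -> 0 < (u *m u^T) 0 0.
Proof.
move=> u0; have [j uj0] : exists j, u 0 j != 0.
  apply/existsP; apply: contraR u0 => /existsPn uj0.
  by apply/eqP/rowP => j; rewrite mxE; apply/eqP/negPn/uj0.
have sq i : u 0 i * u^T i 0 = u 0 i ^+ 2 by rewrite mxE expr2.
rewrite mxE (bigD1 j) //= sq ltr_pwDl ?lt0r ?sqrf_eq0 ?uj0 ?sqr_ge0 //.
by rewrite sumr_ge0 // => i _; rewrite sq sqr_ge0.
Qed.

Lemma row_free_col_mx (F : fieldType) m n (a : 'rV[F]_n) (A : 'M[F]_(m, n)) :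
  row_free (col_mx a A) -> row_free A /\ ~~ (a <= A)%MS.
Proof.
rewrite /row_free -addsmxE => /eqP rk.
split; last first.
  by apply/negP => /addsmx_idPr eqA; move: (rank_leq_row A); rewrite -eqA rk ltnn.
have [le_rk _] := mxrank_adds_leqif a A; rewrite rk in le_rk.
rewrite eqn_leq rank_leq_row -(leq_add2l 1) (leq_trans le_rk) //.
by rewrite leq_add2r rank_leq_row.
Qed.

Section GramSchmidt.
Variable R : rcfType.

Lemma orthonormal_rows_cons m n (a : 'rV[R]_n) (B : 'M[R]_(m, n)) :
  B *m B^T = 1%:M -> ~~ (a <= B)%MS ->
  exists q : 'rV[R]_n,
    col_mx q B *m (col_mx q B)^T = 1%:M /\ (col_mx q B == col_mx a B)%MS.
Proof.
move=> BBT aB; set r := a - a *m B^T *m B.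
have Br : B *m r^T = 0.
  by rewrite /r linearB /= !trmx_mul trmxK mulmxBr !mulmxA BBT mul1mx subrr.
have r0 : r != 0.
  by apply: contraNneq aB => /eqP; rewrite subr_eq0 => /eqP ->; apply: submxMl.
set c := Num.sqrt ((r *m r^T) 0 0); have c_gt0 : 0 < c by rewrite sqrtr_gt0 rV_norm2_gt0.
set q := c^-1 *: r.
have Bq : B *m q^T = 0 by rewrite linearZ /= -scalemxAr Br scaler0.
have qB : q *m B^T = 0 by rewrite -[q]trmxK -trmx_mul Bq trmx0.
have qq : q *m q^T = 1%:M.
  rewrite linearZ /= -scalemxAl -scalemxAr scalerA -invfM -expr2 [r *m _]mx11_scalar.
  by rewrite sqr_sqrtr ?ltW ?rV_norm2_gt0 // scale_scalar_mx mulVf ?gt_eqF ?rV_norm2_gt0.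
exists q; split; first by rewrite tr_col_mx mul_col_row Bq qB qq BBT -scalar_mx_block.
have ar : a = c *: q + a *m B^T *m B by rewrite scalerA divff ?gt_eqF // scale1r subrK.
rewrite -!addsmxE !addsmx_sub !addsmxSr !andbT /=; apply/andP; split.
  by apply: scalemx_sub; apply: addmx_sub_adds; rewrite // -mulNmx submxMl.
by rewrite {1}ar; apply: addmx_sub_adds; [apply: scalemx_sub | apply: submxMl].
Qed.

Lemma exists_orthonormal_rows m n (A : 'M[R]_(m, n)) : row_free A ->
  exists B : 'M[R]_(m, n), B *m B^T = 1%:M /\ (B == A)%MS.
Proof.
elim: m A => [|m IH] A.
  by exists A; rewrite [_ *m _]flatmx0 [1%:M]flatmx0 submx_refl.
move: A; rewrite -[m.+1]/(1 + m)%N => A; rewrite -[A]vsubmxK.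
move=> /row_free_col_mx[freeA aA]; have [B [BBT eqBA]] := IH _ freeA.
have aB : ~~ (usubmx A <= B)%MS by rewrite (eqmxP eqBA).
have [q [qBqB eq_qB]] := orthonormal_rows_cons BBT aB.
exists (col_mx q B); split => //; apply/eqmxP.
apply: eqmx_trans (eqmxP eq_qB) (eqmx_trans (eqmx_sym (addsmxE _ _)) _).
exact: eqmx_trans (adds_eqmx (eqmx_refl _) (eqmxP eqBA)) (addsmxE _ _).
Qed.

End GramSchmidt.

Lemma exists_orth_basis (R : realType) n m (V : 'M[R]_(n, m)) : \rank V = m ->
  exists Q : 'M[R]_(n, m), orth_basis_of Q V.
Proof.
rewrite -mxrank_tr => /eqP freeVT.
have [B [BBT eqBV]] := exists_orthonormal_rows freeVT.
by exists B^T; rewrite /orth_basis_of trmxK.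
Qed.

Definition saddle_mx (F : fieldType) n m (L : 'M[F]_n) (V : 'M[F]_(n, m)) (s2 : F) :
  'M[F]_(n + m) := block_mx (L + s2%:M) V V^T 0.

Definition resid_mx (F : fieldType) n m (L : 'M[F]_n) (V : 'M[F]_(n, m)) (s2 : F) :
  'M[F]_n := ulsubmx (invmx (saddle_mx L V s2)).

Lemma saddle_mx_tr (F : fieldType) n m (L : 'M[F]_n) (V : 'M[F]_(n, m)) (s2 : F) :
  L^T = L -> (saddle_mx L V s2)^T = saddle_mx L V s2.
Proof. by move=> symL; rewrite tr_block_mx trmxK linearD /= tr_scalar_mx symL trmx0. Qed.

Section Saddle.
Variables (F : fieldType) (n m : nat) (L : 'M[F]_n) (V : 'M[F]_(n, m)) (s2 : F).
Hypothesis S_unit : saddle_mx L V s2 \in unitmx.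

Let X := invmx (saddle_mx L V s2).

Lemma saddle_mulmxV : (L + s2%:M) *m resid_mx L V s2 + V *m dlsubmx X = 1%:M.
Proof.
have SX := mulmxV S_unit; rewrite -/X -[X]submxK mulmx_block (scalar_mx_block n m) in SX.
by case/eq_block_mx: SX.
Qed.

Lemma saddle_mulVmx :
  [/\ resid_mx L V s2 *m (L + s2%:M) + ursubmx X *m V^T = 1%:M,
      dlsubmx X *m (L + s2%:M) + drsubmx X *m V^T = 0
    & resid_mx L V s2 *m V = 0].
Proof.
have XS := mulVmx S_unit; rewrite -/X -[X]submxK mulmx_block (scalar_mx_block n m) in XS.
by case/eq_block_mx: XS => eq1 eq2 eq3 _; split => //; rewrite mulmx0 addr0 in eq2.
Qed.

Lemma resid_mx_ker k (W : 'M[F]_(n, k)) :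
  resid_mx L V s2 *m W = 0 -> (W^T <= V^T)%MS.
Proof.
move=> rW; have -> : W = V *m (dlsubmx X *m W).
  by rewrite mulmxA -[W in LHS]mul1mx -saddle_mulmxV mulmxDl -mulmxA rW mulmx0 add0r.
by rewrite trmx_mul submxMl.
Qed.

Lemma fitted_mean :
  row_mx L V *m X *m col_mx 1%:M 0 = 1%:M - s2 *: resid_mx L V s2.
Proof.
rewrite -mulmxA -[X]submxK mul_block_col !mulmx1 !mulmx0 !addr0 mul_row_col.
by rewrite -saddle_mulmxV mulmxDl mul_scalar_mx addrAC addrK.
Qed.

Lemma fitted_var : L^T = L ->
  row_mx L V *m X *m (row_mx L V)^T = L - s2 *: (1%:M - s2 *: resid_mx L V s2).
Proof.
move=> symL; have [eq1 eq2 _] := saddle_mulVmx.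
have XLV : X *m col_mx (L + s2%:M) V^T = col_mx 1%:M 0.
  by rewrite -[X]submxK mul_block_col eq1 eq2.
have -> : (row_mx L V)^T = col_mx (L + s2%:M) V^T - s2 *: col_mx 1%:M 0.
  by rewrite tr_row_mx symL scale_col_mx scaler0 opp_col_mx add_col_mx subr0 scalemx1 addrK.
rewrite -mulmxA mulmxBr XLV -scalemxAr mulmxBr -scalemxAr mulmxA fitted_mean.
by rewrite mul_row_col mulmx1 mulmx0 addr0.
Qed.

End Saddle.

Lemma psd_add_scalar_unit (R : realType) n (K : 'M[R]_n) (s2 : R) :
  psd K -> 0 < s2 -> K + s2%:M \in unitmx.
Proof.
move=> psdK s2_gt0; rewrite -row_free_unit; apply/inj_row_free => u uK0.
apply/eqP; apply: contraT => u0.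
have : (u *m (K + s2%:M) *m u^T) 0 0 = 0 by rewrite uK0 mul0mx mxE.
rewrite mulmxDr mul_mx_scalar mulmxDl -scalemxAl mxE [X in _ + X]mxE => /eqP.
have := psdK u^T; rewrite trmxK => uKu_ge0.
have uu_gt0 := rV_norm2_gt0 u0.
by rewrite paddr_eq0 // ?mulr_ge0 ?ltW // (gt_eqF (mulr_gt0 s2_gt0 uu_gt0)) andbF.
Qed.

Definition proj_compl (R : realType) n m (Q : 'M[R]_(n, m)) : 'M[R]_n := 1%:M - Q *m Q^T.

Section Projector.
Variables (R : realType) (n m : nat) (L : 'M[R]_n) (V Q : 'M[R]_(n, m)) (s2 : R).
Hypotheses (orthQ : orth_basis_of Q V) (rkV : \rank V = m)
  (psdL : psd (Ltilde Q L)) (s2_gt0 : 0 < s2).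

Lemma trV_proj_compl : V^T *m proj_compl Q = 0.
Proof.
have [QTQ /andP[_ /submxP[D ->]]] := orthQ.
by rewrite /proj_compl mulmxBr mulmx1 !mulmxA -(mulmxA D) QTQ mulmx1 subrr.
Qed.

Lemma proj_compl_id k (A : 'M[R]_(k, n)) : A *m V = 0 -> A *m proj_compl Q = A.
Proof.
have [_ /andP[/submxP[D eQ] _]] := orthQ.
move=> AV0; have AQ0 : A *m Q = 0.
  by rewrite -[Q]trmxK eQ trmx_mul trmxK mulmxA AV0 mul0mx.
by rewrite /proj_compl mulmxBr mulmx1 mulmxA AQ0 mul0mx subr0.
Qed.

Lemma proj_compl_saddle k (A : 'M[R]_(k, n)) : A *m V = 0 ->
  A *m (L + s2%:M) *m proj_compl Q = A *m (Ltilde Q L + s2%:M).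
Proof.
move=> AV0; have AP := proj_compl_id AV0.
rewrite (mulmxDr A L) (mulmxDl (A *m L)) (mulmxDr A (Ltilde Q L)) !mul_mx_scalar.
by rewrite -scalemxAl AP /Ltilde -/(proj_compl Q) !mulmxA AP.
Qed.

Lemma saddle_unit : saddle_mx L V s2 \in unitmx.
Proof.
rewrite -row_free_unit; apply/inj_row_free => u.
rewrite -[u]hsubmxK mul_row_block mulmx0 addr0 => /eqP.
rewrite row_mx_eq0 => /andP[/eqP eqL /eqP eqV].
have a0 : lsubmx u = 0.
  have := congr1 (mulmx^~ (proj_compl Q)) eqL.
  rewrite /= mulmxDl proj_compl_saddle // -mulmxA trV_proj_compl mulmx0 addr0 mul0mx.
  have BU := psd_add_scalar_unit psdL s2_gt0.
  by move=> aB0; rewrite -[lsubmx u]mulmx1 -(mulmxV BU) mulmxA aB0 mul0mx.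
have b0 : rsubmx u = 0.
  have freeVT : row_free V^T by rewrite /row_free mxrank_tr rkV.
  by apply/eqP; rewrite -(mulmx_free_eq0 _ freeVT) -eqL a0 mul0mx add0r.
by rewrite a0 b0 row_mx0.
Qed.

Lemma resid_mxE :
  resid_mx L V s2 = proj_compl Q *m invmx (Ltilde Q L + s2%:M).
Proof.
have [eq1 _ residV] := saddle_mulVmx saddle_unit.
have := congr1 (mulmx^~ (proj_compl Q)) eq1.
rewrite /= mulmxDl proj_compl_saddle // -mulmxA trV_proj_compl mulmx0 addr0 mul1mx.
by move <-; rewrite mulmxK ?psd_add_scalar_unit.
Qed.

Lemma smootherE : smoother Q L s2 = 1%:M - s2 *: resid_mx L V s2.
Proof.
have s2_neq0 : s2 != 0 by rewrite gt_eqF.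
set B := Ltilde Q L + s2%:M; have BU : B \in unitmx by apply: psd_add_scalar_unit.
have LtB : Ltilde Q L *m invmx B = 1%:M - s2 *: invmx B.
  by rewrite -[Ltilde Q L](addrK s2%:M) mulmxBl mulmxV // mul_scalar_mx.
have PB : Q *m Q^T *m invmx B = s2^-1 *: (Q *m Q^T).
  have [QTQ _] := orthQ.
  have PPc : Q *m Q^T *m proj_compl Q = 0.
    by rewrite /proj_compl mulmxBr mulmx1 !mulmxA -(mulmxA Q) QTQ mulmx1 subrr.
  have PB : Q *m Q^T *m B = s2 *: (Q *m Q^T).
    by rewrite mulmxDr mul_mx_scalar /Ltilde -/(proj_compl Q) !mulmxA PPc !mul0mx add0r.
  by rewrite -[LHS]scale1r -(mulVf s2_neq0) -scalerA scalemxAl -PB mulmxK.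
rewrite /smoother -/B LtB resid_mxE -/B /proj_compl mulmxBl mul1mx PB.
by rewrite scalerBr scalerA mulfV // scale1r opprB addrCA.
Qed.

End Projector.

Lemma resid_mx_eq_sub (F : fieldType) n m m' (L L' : 'M[F]_n)
    (V : 'M[F]_(n, m)) (V' : 'M[F]_(n, m')) (s2 : F) :
  saddle_mx L V s2 \in unitmx -> saddle_mx L' V' s2 \in unitmx ->
  resid_mx L V s2 = resid_mx L' V' s2 -> (V'^T <= V^T)%MS.
Proof.
move=> SU S'U eq_resid; apply: (resid_mx_ker SU).
by rewrite eq_resid; case: (saddle_mulVmx S'U).
Qed.

Section NewPoint.
Variables (F : fieldType) (n m : nat) (L : 'M[F]_n) (V : 'M[F]_(n, m)) (s2 : F).
Variables (a : 'cV[F]_n) (r : 'rV[F]_m) (c : F).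
Hypotheses (symL : L^T = L) (S_unit : saddle_mx L V s2 \in unitmx)
  (S'_unit : saddle_mx (block_mx L a a^T c%:M) (col_mx V r) s2 \in unitmx).

Let b : 'cV[F]_(n + m) := col_mx a r^T.
Let z := invmx (saddle_mx L V s2) *m b.
Let s := c + s2 - (b^T *m z) 0 0.
Let g := resid_mx (block_mx L a a^T c%:M) (col_mx V r) s2 *m col_mx 0 1%:M.

(* [s] is the Schur complement of the old saddle matrix in the extended one. *)
Lemma saddle_schur : s *: g = col_mx (- usubmx z) 1%:M.
Proof.
have : saddle_mx L V s2 *m z = b by rewrite mulmxA mulmxV // mul1mx.
rewrite -[z]vsubmxK mul_block_col mul0mx addr0 => /eq_col_mx[eq1 eq2].
set t := col_mx (col_mx (- usubmx z) 1%:M) (- dsubmx z).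
have St : saddle_mx (block_mx L a a^T c%:M) (col_mx V r) s2 *m t
          = s *: col_mx (col_mx 0 1%:M) 0.
  rewrite /saddle_mx [s2%:M](scalar_mx_block n 1) add_block_mx.
  rewrite !mul_block_col tr_col_mx mul_row_col mul_col_mx.
  rewrite !scale_col_mx scalemx1 add_col_mx !addr0 !scaler0 !mulmx1 !mulmxN mul0mx subr0.
  congr col_mx; last by rewrite eq2 addNr.
  congr col_mx; first by rewrite -eq1 addKr subrr.
  have bz : (b^T *m z) 0 0 = (a^T *m usubmx z) 0 0 + (r *m dsubmx z) 0 0.
    by rewrite -[z in LHS]vsubmxK tr_col_mx trmxK mul_row_col mxE.
  apply/matrixP => i j; rewrite !ord1 /s bz !mxE eqxx !mulr1n.
  ring.
set X' := invmx (saddle_mx (block_mx L a a^T c%:M) (col_mx V r) s2).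
have XE : X' *m col_mx (col_mx 0 1%:M) 0 = col_mx g (dlsubmx X' *m col_mx 0 1%:M).
  by rewrite -[X' in LHS]submxK mul_block_col !mulmx0 !addr0.
have := congr1 (mulmx X') St; rewrite mulKmx // -scalemxAr XE scale_col_mx.
by case/eq_col_mx => <- _; rewrite col_mxKu.
Qed.

Lemma schur_complementE : s = (dsubmx g 0 0)^-1.
Proof.
have := congr1 dsubmx saddle_schur; rewrite linearZ col_mxKd => /matrixP/(_ 0 0).
rewrite [LHS]mxE [RHS]mxE eqxx => sg.
have gd0 : dsubmx g 0 0 != 0.
  by apply/eqP => gd0; move: sg; rewrite gd0 mulr0 => /eqP; rewrite eq_sym oner_eq0.
by apply: (mulIf gd0); rewrite sg mulVf.
Qed.

Lemma new_point_var :
  c - (b^T *m invmx (saddle_mx L V s2) *m b) 0 0 = (dsubmx g 0 0)^-1 - s2.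
Proof. by rewrite -schur_complementE -mulmxA /s addrAC addrK. Qed.

Lemma new_point_mean (y : 'cV[F]_n) :
  (b^T *m invmx (saddle_mx L V s2) *m col_mx y 0) 0 0
    = - ((usubmx g)^T *m y) 0 0 / dsubmx g 0 0.
Proof.
have zu : usubmx z = - (s *: usubmx g).
  by have := congr1 usubmx saddle_schur; rewrite linearZ col_mxKu => ->; rewrite opprK.
have -> : b^T *m invmx (saddle_mx L V s2) = z^T.
  by rewrite trmx_mul trmx_inv saddle_mx_tr.
rewrite -[z]vsubmxK tr_col_mx mul_row_col mulmx0 addr0 zu schur_complementE.
rewrite linearN /= linearZ /= mulNmx -scalemxAl.
by move: (_ *m y) (dsubmx g 0 0) => P d; rewrite !mxE mulrC mulNr.
Qed.

End NewPoint.

Definition extend (T : Type) n (x : 'I_n -> T) (w : T) : 'I_(n + 1) -> T :=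
  fun i => match split i with inl j => x j | inr _ => w end.

Definition resid_at (R : realType) d n m (l : 'rV[R]_d -> 'rV[R]_d -> R)
  (v : 'I_m -> 'rV[R]_d -> R) (x : 'I_n -> 'rV[R]_d) (s2 : R) : 'M[R]_n :=
  resid_mx (kernel_mx l x) (basis_mx v x) s2.

Section Families.
Variables (R : realType) (d : nat).
Implicit Types (Omega : 'rV[R]_d -> Prop) (l : 'rV[R]_d -> 'rV[R]_d -> R) (w : 'rV[R]_d).

Lemma basis_mx_extend m (v : 'I_m -> 'rV[R]_d -> R) n (x : 'I_n -> 'rV[R]_d) w :
  basis_mx v (extend x w) = col_mx (basis_mx v x) (\row_j v j w).
Proof. by apply/matrixP => i j; rewrite !mxE /extend; case: (split i) => i'; rewrite !mxE. Qed.

Lemma basis_mx_extend_sub m (v : 'I_m -> 'rV[R]_d -> R) n (x : 'I_n -> 'rV[R]_d) w :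
  (basis_mx v x <= basis_mx v (extend x w))%MS.
Proof. by rewrite basis_mx_extend -addsmxE addsmxSl. Qed.

Lemma kernel_mx_extend l n (x : 'I_n -> 'rV[R]_d) w :
  kernel_mx l (extend x w) =
  block_mx (kernel_mx l x) (\col_i l (x i) w) (\row_j l w (x j)) (l w w)%:M.
Proof.
apply/matrixP => i j; rewrite block_mxEv !mxE /extend.
by case: (split i) => i'; rewrite !mxE; case: (split j) => j'; rewrite !mxE // !ord1 mulr1n.
Qed.

Lemma finite_subset_extend Omega n (x : 'I_n -> 'rV[R]_d) w :
  finite_subset Omega x -> Omega w -> (forall i, x i <> w) ->
  finite_subset Omega (extend x w).
Proof.
move=> [injx Omx] Omw xw; split=> [i j|i]; rewrite /extend; last by case: (split i).
case: splitP => i' ei; case: splitP => j' ej.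
- by move/injx => eij; apply: val_inj; rewrite /= ei ej eij.
- by move/xw.
- by move/esym/xw.
- by move=> _; apply: val_inj; rewrite /= ei ej !ord1.
Qed.

Lemma unisolvent_sub m (v : 'I_m -> 'rV[R]_d -> R) n0 n
    (x0 : 'I_n0 -> 'rV[R]_d) (x : 'I_n -> 'rV[R]_d) :
  unisolvent v x0 -> (basis_mx v x0 <= basis_mx v x)%MS -> unisolvent v x.
Proof.
by move=> rk0 sub; apply/eqP; rewrite eqn_leq rank_leq_col -{1}rk0 mxrankS.
Qed.

Lemma unisolvent_extend m (v : 'I_m -> 'rV[R]_d -> R) n (x : 'I_n -> 'rV[R]_d) w :
  unisolvent v x -> unisolvent v (extend x w).
Proof. by move/unisolvent_sub; apply; apply: basis_mx_extend_sub. Qed.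

Lemma lv_row_at m l (v : 'I_m -> 'rV[R]_d -> R) n (x : 'I_n -> 'rV[R]_d) k :
  lv_row l v x (x k) = row k (row_mx (kernel_mx l x) (basis_mx v x)).
Proof. by rewrite row_row_mx /lv_row; congr row_mx; apply/rowP => i; rewrite !mxE. Qed.

End Families.

Section Unisolvent.
Variables (R : realType) (d : nat) (Omega : 'rV[R]_d -> Prop).

Lemma exists_point_outside_span m (v : 'I_m -> 'rV[R]_d -> R) n (x : 'I_n -> 'rV[R]_d) :
  lin_indep_on Omega v -> (\rank (basis_mx v x) < m)%N ->
  exists2 w, Omega w & ~~ (\row_j v j w <= basis_mx v x)%MS.
Proof.
move=> indep rk_lt.
have /rowV0Pn[u /sub_kermxP uV u0] : kermx (basis_mx v x)^T != 0.
  by rewrite -mxrank_eq0 mxrank_ker mxrank_tr subn_eq0 -ltnNge.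
have [w wP] : exists w, ~ (Omega w -> \sum_j u 0 j * v j w = 0).
  apply: not_all_ex_not => vu0; move/negP: u0; apply; apply/eqP/rowP => j.
  by rewrite mxE; apply: indep vu0 j.
have [Omw vu0] := imply_to_and _ _ wP.
exists w; first exact: Omw.
apply/negP => /submxP[D eD]; apply: vu0.
have -> : \sum_j u 0 j * v j w = (\row_j v j w *m u^T) 0 0.
  by rewrite mxE; apply: eq_bigr => j _; rewrite !mxE mulrC.
have Vu : basis_mx v x *m u^T = 0 by rewrite -[basis_mx v x]trmxK -trmx_mul uV trmx0.
by rewrite eD -mulmxA Vu mulmx0 mxE.
Qed.

Lemma exists_unisolvent_extension m (v : 'I_m -> 'rV[R]_d -> R)
    n0 (x0 : 'I_n0 -> 'rV[R]_d) :
  lin_indep_on Omega v -> finite_subset Omega x0 ->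
  exists n (x : 'I_n -> 'rV[R]_d), [/\ finite_subset Omega x, unisolvent v x &
    forall mu (u : 'I_mu -> 'rV[R]_d -> R), (basis_mx u x0 <= basis_mx u x)%MS].
Proof.
move=> indep; have [k] := ubnP (m - \rank (basis_mx v x0)).
elim: k n0 x0 => [//|k IH] n0 x0 lt_k fx0.
have [rk_lt|rk_ge] := ltnP (\rank (basis_mx v x0)) m; last first.
  exists n0, x0; split => //; apply/eqP.
  by rewrite eqn_leq rank_leq_col.
have [w Omw wV] := exists_point_outside_span indep rk_lt.
have x0w i : x0 i <> w.
  move=> eiw; move: wV; rewrite -eiw.
  have -> : \row_j v j (x0 i) = row i (basis_mx v x0) by apply/rowP => j; rewrite !mxE.
  by rewrite row_sub.
have [n [x [fx unix subx]]] : exists n (x : 'I_n -> 'rV[R]_d),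
    [/\ finite_subset Omega x, unisolvent v x &
    forall mu (u : 'I_mu -> 'rV[R]_d -> R), (basis_mx u (extend x0 w) <= basis_mx u x)%MS].
  apply: IH; last exact: finite_subset_extend.
  have rk_ext : (\rank (basis_mx v x0) < \rank (basis_mx v (extend x0 w)))%N.
    apply: rank_ltmx; rewrite ltmxE basis_mx_extend_sub /= basis_mx_extend.
    by rewrite -addsmxE addsmx_sub negb_and wV orbT.
  by apply: leq_trans (ltn_sub2l rk_lt rk_ext) _; rewrite -ltnS.
exists n, x; split=> // mu u.
exact: submx_trans (basis_mx_extend_sub u x0 w) (subx mu u).
Qed.

Lemma exists_common_unisolvent m (v : 'I_m -> 'rV[R]_d -> R)
    m' (v' : 'I_m' -> 'rV[R]_d -> R) :
  lin_indep_on Omega v -> lin_indep_on Omega v' ->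
  exists n (x : 'I_n -> 'rV[R]_d),
    [/\ finite_subset Omega x, unisolvent v x & unisolvent v' x].
Proof.
move=> indep indep'; have f0 : finite_subset Omega (fun i : 'I_0 => 0) by split; case.
have [n1 [x1 [fx1 unix1 _]]] := exists_unisolvent_extension indep f0.
have [n [x [fx unix' subx]]] := exists_unisolvent_extension indep' fx1.
by exists n, x; split => //; apply: unisolvent_sub unix1 (subx _ v).
Qed.

End Unisolvent.

Lemma row_mul_tr_row (R : ringType) n p (A : 'M[R]_(n, p)) (B : 'M[R]_p) k :
  (row k A *m B *m (row k A)^T) 0 0 = (A *m B *m A^T) k k.
Proof.
by rewrite -row_mul !mxE; apply: eq_bigr => j _; rewrite !mxE.
Qed.

Section SPM.
Variables (R : realType) (d : nat) (Omega : 'rV[R]_d -> Prop) (m : nat)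
  (l : 'rV[R]_d -> 'rV[R]_d -> R) (v : 'I_m -> 'rV[R]_d -> R).
Hypothesis spm : is_SPM Omega l v.

Section Data.
Variables (n : nat) (x : 'I_n -> 'rV[R]_d) (s2 : R).
Hypotheses (fx : finite_subset Omega x) (unix : unisolvent v x) (s2_gt0 : 0 < s2).

Lemma spm_kernel_sym : (kernel_mx l x)^T = kernel_mx l x.
Proof.
by case: spm => _ [symm _]; case: fx => _ Omx; apply/matrixP => i j; rewrite !mxE symm.
Qed.

Lemma spm_psd Q : orth_basis_of Q (basis_mx v x) -> psd (Ltilde Q (kernel_mx l x)).
Proof. by case: spm => _ [_ psdL]; apply: psdL. Qed.

Lemma spm_saddle_unit : saddle_mx (kernel_mx l x) (basis_mx v x) s2 \in unitmx.
Proof.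
have [Q orthQ] := exists_orth_basis unix.
exact: saddle_unit orthQ unix (spm_psd orthQ) s2_gt0.
Qed.

Lemma spm_smootherE Q : orth_basis_of Q (basis_mx v x) ->
  smoother Q (kernel_mx l x) s2 = 1%:M - s2 *: resid_at l v x s2.
Proof. by move=> orthQ; apply: smootherE orthQ unix (spm_psd orthQ) s2_gt0. Qed.

Lemma pred_mean_at k (y : 'cV[R]_n) :
  pred_mean l v x s2 y (x k) = ((1%:M - s2 *: resid_at l v x s2) *m y) k 0.
Proof.
rewrite /pred_mean.
have -> : col_mx y 0 = col_mx 1%:M (0 : 'M_(m, n)) *m y by rewrite mul_col_mx mul1mx mul0mx.
rewrite lv_row_at !mulmxA -!row_mul -(fitted_mean spm_saddle_unit).
by rewrite mxE.
Qed.

Lemma pred_var_at k :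
  pred_var l v x s2 (x k) = s2 * (1%:M - s2 *: resid_at l v x s2) k k.
Proof.
rewrite /pred_var lv_row_at row_mul_tr_row (fitted_var spm_saddle_unit spm_kernel_sym).
have -> : l (x k) (x k) = kernel_mx l x k k by rewrite mxE.
by move: (kernel_mx l x) (1%:M - _) => K M; rewrite !mxE opprB addrC subrK.
Qed.

Lemma smoother_pred_mean Q : orth_basis_of Q (basis_mx v x) ->
  smoother Q (kernel_mx l x) s2 = \matrix_(i, j) pred_mean l v x s2 (delta_mx j 0) (x i).
Proof.
move=> orthQ; apply/matrixP => i j; rewrite spm_smootherE // mxE pred_mean_at.
by move: (1%:M - _) => M; rewrite -colE mxE.
Qed.

End Data.

Section NewPoint.
Variables (n : nat) (x : 'I_n -> 'rV[R]_d) (s2 : R) (w : 'rV[R]_d).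
Hypotheses (fx : finite_subset Omega x) (unix : unisolvent v x) (s2_gt0 : 0 < s2).
Hypotheses (Omw : Omega w) (xw : forall k, x k <> w).

Let a : 'cV[R]_n := \col_i l (x i) w.
Let r : 'rV[R]_m := \row_j v j w.
Let g := resid_at l v (extend x w) s2 *m col_mx 0 1%:M.

Lemma kernel_mx_extend_sym :
  kernel_mx l (extend x w) = block_mx (kernel_mx l x) a a^T (l w w)%:M.
Proof.
case: spm => _ [symm _]; case: fx => _ Omx.
by rewrite kernel_mx_extend; congr block_mx; apply/rowP => j; rewrite !mxE symm.
Qed.

Lemma lv_row_new : lv_row l v x w = (col_mx a r^T)^T.
Proof.
case: spm => _ [symm _]; case: fx => _ Omx.
by rewrite tr_col_mx trmxK; congr row_mx; apply/rowP => j; rewrite !mxE symm ?Omx.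
Qed.

Lemma extend_saddle_unit :
  saddle_mx (block_mx (kernel_mx l x) a a^T (l w w)%:M) (col_mx (basis_mx v x) r) s2
    \in unitmx.
Proof.
rewrite -kernel_mx_extend_sym -basis_mx_extend.
by apply: spm_saddle_unit s2_gt0; [apply: finite_subset_extend | apply: unisolvent_extend].
Qed.

Lemma pred_mean_new (y : 'cV[R]_n) :
  pred_mean l v x s2 y w = - ((usubmx g)^T *m y) 0 0 / dsubmx g 0 0.
Proof.
rewrite /pred_mean lv_row_new /g /resid_at kernel_mx_extend_sym basis_mx_extend.
exact: new_point_mean (spm_kernel_sym fx) (spm_saddle_unit fx unix s2_gt0) extend_saddle_unit y.
Qed.

Lemma pred_var_new : pred_var l v x s2 w = (dsubmx g 0 0)^-1 - s2.
Proof.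
rewrite /pred_var lv_row_new /g /resid_at kernel_mx_extend_sym basis_mx_extend trmxK.
exact: new_point_var (spm_saddle_unit fx unix s2_gt0) extend_saddle_unit.
Qed.

End NewPoint.

End SPM.

Definition smoother_equiv (R : realType) d (Omega : 'rV[R]_d -> Prop)
    m (l : 'rV[R]_d -> 'rV[R]_d -> R) (v : 'I_m -> 'rV[R]_d -> R)
    m' (l' : 'rV[R]_d -> 'rV[R]_d -> R) (v' : 'I_m' -> 'rV[R]_d -> R) :=
  forall n (x : 'I_n -> 'rV[R]_d), finite_subset Omega x ->
    unisolvent v x -> unisolvent v' x ->
    forall (Q : 'M[R]_(n, m)) (Q' : 'M[R]_(n, m')),
      orth_basis_of Q (basis_mx v x) -> orth_basis_of Q' (basis_mx v' x) ->
    forall s2 : R, 0 < s2 -> smoother Q (kernel_mx l x) s2 = smoother Q' (kernel_mx l' x) s2.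

Section TwoModels.
Variables (R : realType) (d : nat) (Omega : 'rV[R]_d -> Prop).
Variables (m : nat) (l : 'rV[R]_d -> 'rV[R]_d -> R) (v : 'I_m -> 'rV[R]_d -> R).
Variables (m' : nat) (l' : 'rV[R]_d -> 'rV[R]_d -> R) (v' : 'I_m' -> 'rV[R]_d -> R).
Hypotheses (spm : is_SPM Omega l v) (spm' : is_SPM Omega l' v').

Lemma resid_at_eq_dim n (x : 'I_n -> 'rV[R]_d) s2 :
  finite_subset Omega x -> unisolvent v x -> unisolvent v' x -> 0 < s2 ->
  resid_at l v x s2 = resid_at l' v' x s2 -> m = m'.
Proof.
move=> fx unix unix' s2_gt0 eq_resid.
have SU := spm_saddle_unit spm fx unix s2_gt0.
have SU' := spm_saddle_unit spm' fx unix' s2_gt0.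
have /mxrankS := resid_mx_eq_sub SU SU' eq_resid.
have /mxrankS := resid_mx_eq_sub SU' SU (esym eq_resid).
by rewrite !mxrank_tr unix unix' => le_mm' le_m'm; apply/eqP; rewrite eqn_leq le_mm'.
Qed.

Lemma smoother_equiv_resid_at n (x : 'I_n -> 'rV[R]_d) s2 :
  smoother_equiv Omega l v l' v' ->
  finite_subset Omega x -> unisolvent v x -> unisolvent v' x -> 0 < s2 ->
  resid_at l v x s2 = resid_at l' v' x s2.
Proof.
move=> eq_smoother fx unix unix' s2_gt0.
have [Q orthQ] := exists_orth_basis unix; have [Q' orthQ'] := exists_orth_basis unix'.
move: (eq_smoother n x fx unix unix' Q Q' orthQ orthQ' s2 s2_gt0).
rewrite (spm_smootherE spm fx unix s2_gt0 orthQ) (spm_smootherE spm' fx unix' s2_gt0 orthQ').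
by move/addrI/oppr_inj/(scalerI (lt0r_neq0 s2_gt0)).
Qed.

Lemma smoother_equiv_dim : smoother_equiv Omega l v l' v' -> m = m'.
Proof.
move=> eq_smoother; have [n [x [fx unix unix']]] := exists_common_unisolvent spm.1 spm'.1.
exact: resid_at_eq_dim fx unix unix' ltr01 (smoother_equiv_resid_at eq_smoother fx unix unix' ltr01).
Qed.

End TwoModels.

Unset Implicit Arguments.
Set Strict Implicit.

Theorem mainTheorem5 (R : realType) (d : nat) (Omega : 'rV[R]_d -> Prop)
  (m : nat) (l : 'rV[R]_d -> 'rV[R]_d -> R) (v : 'I_m -> 'rV[R]_d -> R)
  (m' : nat) (l' : 'rV[R]_d -> 'rV[R]_d -> R) (v' : 'I_m' -> 'rV[R]_d -> R) :
  is_SPM Omega l v -> is_SPM Omega l' v' ->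
  (pred_equiv Omega l v l' v' <->
   (forall n (x : 'I_n -> 'rV[R]_d), finite_subset Omega x ->
      unisolvent v x -> unisolvent v' x ->
      forall (Q : 'M[R]_(n, m)) (Q' : 'M[R]_(n, m')),
        orth_basis_of Q (basis_mx v x) -> orth_basis_of Q' (basis_mx v' x) ->
      forall s2 : R, 0 < s2 ->
        smoother Q (kernel_mx l x) s2 = smoother Q' (kernel_mx l' x) s2)).
Proof.
move=> spm spm'; split.
  move=> [em eq_pred] n x fx unix unix'; subst m' => Q Q' orthQ orthQ' s2 s2_gt0.
  rewrite (smoother_pred_mean spm fx unix s2_gt0 orthQ).
  rewrite (smoother_pred_mean spm' fx unix' s2_gt0 orthQ').
  apply/matrixP => i j; rewrite !mxE.
  by have [] := eq_pred n x fx unix unix' (x i) (fx.2 i) (delta_mx j 0) s2 s2_gt0.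
move=> eq_smoother; have em := smoother_equiv_dim spm spm' eq_smoother.
have eq_resid := smoother_equiv_resid_at spm spm' eq_smoother.
subst m'; split=> // n x fx unix unix' w Omw y s2 s2_gt0.
have [[k <-] | /not_ex_all_not xw] := classic (exists k, x k = w).
  rewrite (pred_mean_at spm fx unix s2_gt0) (pred_mean_at spm' fx unix' s2_gt0).
  rewrite (pred_var_at spm fx unix s2_gt0) (pred_var_at spm' fx unix' s2_gt0).
  by rewrite eq_resid.
rewrite (pred_mean_new spm fx unix s2_gt0 Omw xw) (pred_mean_new spm' fx unix' s2_gt0 Omw xw).
rewrite (pred_var_new spm fx unix s2_gt0 Omw xw) (pred_var_new spm' fx unix' s2_gt0 Omw xw).
by rewrite eq_resid //; [exact: finite_subset_extend | exact: unisolvent_extend..].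
Qed.
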